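(* Let $N\ge1$, let $\mathcal L\in\mathbb{R}^{N\times N}$ be the Laplacian of an undirected graph $\mathcal G$ on $N$ nodes, and let $\Delta\in\mathbb{R}^{N\times N}$ be a diagonal matrix with every diagonal entry in $\{0,1\}$. Then every nonzero eigenvalue of $\mathcal H=\mathcal L+\Delta$ is not less than $$\lambda_H:=\frac{4}{N(N^2-N+4)}>0.$$
   Context: The graph $\mathcal G$ has node set $\{1,\dots,N\}$ and adjacency entries $a_{ij}\in\{0,1\}$ with $a_{ij}=a_{ji}$ (undirected, no self-loops); its Laplacian $\mathcal L$ has $l_{ii}=\sum_{j=1}^Na_{ij}$ and $l_{ij}=-a_{ij}$ for $i\ne j$. *)

From HB Require Import structures.
From mathcomp Require Import all_boot all_order all_algebra.
Set Implicit Arguments. Unset Strict Implicit. Unset Printing Implicit Defensive.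
Import Order.TTheory GRing.Theory Num.Theory.
Local Open Scope ring_scope.

(* An undirected graph without self-loops on nodes 'I_N is a symmetric,
   irreflexive relation e; its adjacency entries are a_ij = 1 if e i j, else 0. *)
Definition adj (R : nzRingType) (N : nat) (e : rel 'I_N) : 'M[R]_N :=
  \matrix_(i, j) (e i j)%:R.

Definition laplacian (R : nzRingType) (N : nat) (e : rel 'I_N) : 'M[R]_N :=
  \matrix_(i, j) (if i == j then \sum_(k < N) adj R e i k else - adj R e i j).

Definition lambdaH (R : fieldType) (N : nat) : R :=
  4 / (N%:R * (N%:R ^+ 2 - N%:R + 4)).

From HB Require Import structures.
From mathcomp Require Import all_boot all_order all_algebra.
From mathcomp Require Import ring lra.
Import Order.TTheory GRing.Theory Num.Theory.
Set Implicit Arguments. Unset Strict Implicit.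
Local Open Scope ring_scope.

(* Restrict an eigenvector of H = L + Delta for a <> 0 to one connected
   component of the graph; H is block diagonal along the components, so this is
   still an eigenvector x.  Its Rayleigh quotient reads
   2 a |x|^2 = sum_ij a_ij (x_i - x_j)^2 + 2 sum_i Delta_ii x_i^2,
   so a > 0 and both terms on the right are at most 2 a |x|^2.  Along a path of
   at most N - 1 edges, Cauchy-Schwarz bounds each x_i^2: against a node q of the
   component with Delta_qq = 1 (whose x_q^2 is part of the Delta term), or, when
   there is none, against a node r with x_i x_r < 0, which exists because x is
   then orthogonal to the all-ones vector.  Either way
   |x|^2 <= (N^2 - N + 1) a |x|^2, and 1 / (N^2 - N + 1) >= lambda_H since
   N (N^2 - N + 4) - 4 (N^2 - N + 1) = (N - 1) (N - 2)^2. *)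

Lemma sumr_seq_sqr_le (R : realDomainType) (s : seq R) :
  (\sum_(t <- s) t) ^+ 2 <= (size s)%:R * \sum_(t <- s) t ^+ 2.
Proof.
have sum_const (c : R) : \sum_(u <- s) c = (size s)%:R * c.
  by rewrite big_const_seq count_predT iter_addr_0 mulr_natl.
have sum_sqr_twice : 2 * ((size s)%:R * \sum_(t <- s) t ^+ 2) =
    \sum_(t <- s) \sum_(u <- s) (t ^+ 2 + u ^+ 2).
  under [RHS]eq_bigr => t _ do rewrite big_split /= sum_const.
  by rewrite big_split /= sum_const -mulr_sumr; ring.
suff : 2 * (\sum_(t <- s) t) ^+ 2 <= 2 * ((size s)%:R * \sum_(t <- s) t ^+ 2).
  by rewrite ler_pM2l.
rewrite sum_sqr_twice expr2 mulr_suml mulr_sumr; apply: ler_sum => t _.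
rewrite mulr_sumr mulr_sumr; apply: ler_sum => u _.
by rewrite -subr_ge0 (_ : _ - _ = (t - u) ^+ 2) ?sqr_ge0 //; ring.
Qed.

Lemma ler_sum_subset (R : numDomainType) (T : finType) (A B : {set T}) (F : T -> R) :
  A \subset B -> (forall i, 0 <= F i) -> \sum_(i in A) F i <= \sum_(i in B) F i.
Proof.
move=> /subsetP AB F_ge0; rewrite [X in X <= _]big_mkcond [X in _ <= X]big_mkcond.
apply: ler_sum => i _; case: ifP => [/AB -> // | _]; by case: ifP.
Qed.

Lemma exists_mul_lt0 (R : realDomainType) (T : finType) (y : T -> R) i :
  \sum_j y j = 0 -> y i != 0 -> exists j, y i * y j < 0.
Proof.
move=> sum0 yi0.
case/boolP: [exists j, y i * y j < 0] => [/existsP // | /existsPn y_ge0].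
have : 0 < \sum_j y i * y j.
  rewrite (bigD1 i) //= -expr2 ltr_pwDl ?exprn_even_gt0 ?yi0 ?orbT //.
  by apply: sumr_ge0 => j _; rewrite leNgt y_ge0.
by rewrite -mulr_sumr sum0 mulr0 ltxx.
Qed.

Lemma mulx_diag (R : nzRingType) (N : nat) (D : 'M[R]_N) :
  (forall i j, i != j -> D i j = 0) ->
  forall (x : 'I_N -> R) j, \sum_i x i * D i j = x j * D j j.
Proof.
move=> D_diag x j; rewrite (bigD1 j) //= big1 ?addr0 // => i ij.
by rewrite D_diag ?mulr0.
Qed.

Lemma connect_block (R : nzRingType) (N : nat) (e : rel 'I_N) (M : 'M[R]_N) p :
  symmetric e -> (forall i j, i != j -> ~~ e i j -> M i j = 0) ->
  forall i j, connect e p i != connect e p j -> M i j = 0.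
Proof.
move=> e_sym M_supp i j cij; apply: M_supp.
  by apply: contraNneq cij => ->.
apply: contraNN cij => eij; apply/eqP; apply/idP/idP => [pi | pj].
  exact: connect_trans pi (connect1 eij).
by apply: connect_trans pj (connect1 _); rewrite e_sym.
Qed.

Lemma mulx_restrict (R : nzRingType) (N : nat) (M : 'M[R]_N) (C : pred 'I_N) x j :
  (forall i j, C i != C j -> M i j = 0) ->
  \sum_i (if C i then x i else 0) * M i j = if C j then \sum_i x i * M i j else 0.
Proof.
move=> M_block; case Cj: (C j).
  by apply: eq_bigr => i _; case Ci: (C i); rewrite // M_block ?mulr0 ?Ci ?Cj.
by apply: big1 => i _; case Ci: (C i); rewrite ?mul0r // M_block ?mulr0 ?Ci ?Cj.
Qed.

Section EdgeEnergy.
Variables (R : realDomainType) (N : nat) (e : rel 'I_N).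
Hypothesis e_sym : symmetric e.
Implicit Types (x : 'I_N -> R) (A B : {set 'I_N}).

Definition edge_energy x A :=
  \sum_(i in A) \sum_(j in A) (e i j)%:R * (x i - x j) ^+ 2.

Let edge_energy_term_ge0 x i j : 0 <= (e i j)%:R * (x i - x j) ^+ 2.
Proof. by rewrite mulr_ge0 ?ler0n ?sqr_ge0. Qed.

Lemma edge_energy_ge0 x A : 0 <= edge_energy x A.
Proof. by do 2!apply: sumr_ge0 => ? _; apply: edge_energy_term_ge0. Qed.

Lemma edge_energyS x A B : A \subset B -> edge_energy x A <= edge_energy x B.
Proof.
move=> AB; rewrite /edge_energy.
apply: (@le_trans _ _ (\sum_(i in A) \sum_(j in B) (e i j)%:R * (x i - x j) ^+ 2)).
  by apply: ler_sum => i _; apply: ler_sum_subset AB _ => j; apply: edge_energy_term_ge0.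
by apply: ler_sum_subset AB _ => i; apply: sumr_ge0 => j _; apply: edge_energy_term_ge0.
Qed.

Lemma edge_energyT x :
  edge_energy x [set: 'I_N] = \sum_i \sum_j (e i j)%:R * (x i - x j) ^+ 2.
Proof.
by apply: eq_big => [i|i _]; rewrite ?in_setT //; apply: eq_bigl => j; rewrite in_setT.
Qed.

Lemma edge_energy_setU1 x a A : a \notin A ->
  edge_energy x (a |: A) =
  edge_energy x A + 2 * \sum_(j in A) (e a j)%:R * (x a - x j) ^+ 2.
Proof.
move=> aA; rewrite /edge_energy.
under eq_bigr => i _ do rewrite (big_setU1 a aA) /=.
rewrite (big_setU1 a aA) /= subrr expr0n mulr0 add0r big_split /=.
have -> : \sum_(i in A) (e i a)%:R * (x i - x a) ^+ 2 =
          \sum_(j in A) (e a j)%:R * (x a - x j) ^+ 2.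
  by apply: eq_bigr => i _; rewrite e_sym -sqrrN opprB.
ring.
Qed.

Lemma edge_energy_path x y ps : path e y ps -> uniq (y :: ps) ->
  2 * \sum_(d <- pairmap (fun u v => x u - x v) y ps) d ^+ 2
    <= edge_energy x [set:: y :: ps].
Proof.
elim: ps y => [|z ps IHps] y /=.
  by rewrite big_nil mulr0 => _ _; apply: edge_energy_ge0.
move=> /andP[eyz yz_path] /andP[y_notin z_uniq].
rewrite big_cons set_cons edge_energy_setU1; last by rewrite inE.
have := IHps z yz_path z_uniq.
have : (x y - x z) ^+ 2 <= \sum_(j in [set:: z :: ps]) (e y j)%:R * (x y - x j) ^+ 2.
  rewrite (bigD1 z) /=; last by rewrite inE mem_head.
  rewrite eyz mul1r lerDl; apply: sumr_ge0 => j _; apply: edge_energy_term_ge0.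
lra.
Qed.

Lemma sum_pairmap_diff x y ps :
  \sum_(d <- pairmap (fun u v => x u - x v) y ps) d = x y - x (last y ps).
Proof.
elim: ps y => [|z ps IHps] y /=; first by rewrite big_nil subrr.
by rewrite big_cons IHps addrA subrK.
Qed.

Lemma connect_increments x i j : connect e i j ->
  exists ds : seq R, [/\ (size ds < N)%N, x i - x j = \sum_(d <- ds) d
    & 2 * \sum_(d <- ds) d ^+ 2 <= edge_energy x [set: 'I_N]].
Proof.
move=> /connectP[ps ps_path ->]; case: (shortenP ps_path) => qs qs_path qs_uniq _.
exists (pairmap (fun u v => x u - x v) i qs); split.
- rewrite size_pairmap -ltnS -/(size (i :: qs)) -(card_uniqP qs_uniq).
  by rewrite ltnS -[X in (_ <= X)%N]card_ord max_card.
- by rewrite sum_pairmap_diff.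
- exact: le_trans (edge_energy_path x qs_path qs_uniq) (edge_energyS x (subsetT _)).
Qed.

End EdgeEnergy.

Section LaplacianForm.
Variables (R : realDomainType) (N : nat) (e : rel 'I_N).
Hypotheses (e_sym : symmetric e) (e_irr : irreflexive e).
Implicit Types (x : 'I_N -> R).

Lemma laplacianE i j :
  laplacian R e i j = (i == j)%:R * \sum_k (e i k)%:R - (e i j)%:R.
Proof.
rewrite !mxE; case: eqP => [<- | _]; last by rewrite mul0r sub0r.
by rewrite e_irr mul1r subr0; apply: eq_bigr => k _; rewrite mxE.
Qed.

Lemma mulx_laplacian x j :
  \sum_i x i * laplacian R e i j = \sum_i (e i j)%:R * (x j - x i).
Proof.
under eq_bigr do rewrite laplacianE mulrBr.
rewrite sumrB (bigD1 j) //= eqxx mul1r [X in _ + X - _]big1 ?addr0; last first.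
  by move=> i /negbTE ->; rewrite mul0r mulr0.
under [RHS]eq_bigr do rewrite mulrBr.
rewrite sumrB -mulr_suml [x j * _]mulrC; congr (_ * _ - _).
  by apply: eq_bigr => i _; rewrite e_sym.
by apply: eq_bigr => i _; rewrite mulrC.
Qed.

Lemma sum_mulx_laplacian x : \sum_j \sum_i x i * laplacian R e i j = 0.
Proof.
rewrite (eq_bigr _ (fun j _ => mulx_laplacian x j)).
have antisym : \sum_j \sum_i (e i j)%:R * (x j - x i) =
               - \sum_j \sum_i (e i j)%:R * (x j - x i).
  rewrite [LHS]exchange_big -sumrN; apply: eq_bigr => i _.
  by rewrite -sumrN; apply: eq_bigr => j _; rewrite e_sym -mulrN opprB.
lra.
Qed.

Lemma laplacian_form x :
  2 * \sum_j (\sum_i x i * laplacian R e i j) * x j = edge_energy e x [set: 'I_N].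
Proof.
under eq_bigr do rewrite mulx_laplacian mulr_suml.
have swap : \sum_j \sum_i (e i j)%:R * (x j - x i) * x j =
            \sum_j \sum_i (e i j)%:R * (x i - x j) * x i.
  by rewrite exchange_big; apply: eq_bigr => j _; apply: eq_bigr => i _; rewrite e_sym.
rewrite mulr2n mulrDl mul1r {2}swap -big_split edge_energyT exchange_big /=.
apply: eq_bigr => j _; rewrite -big_split; apply: eq_bigr => i _ /=; ring.
Qed.

End LaplacianForm.

Section EigenvectorBound.
Variables (R : realFieldType) (N : nat) (e : rel 'I_N).
Hypotheses (e_sym : symmetric e) (e_irr : irreflexive e).
Variable Delta : 'M[R]_N.
Hypotheses (Delta_diag : forall i j, i != j -> Delta i j = 0)
           (Delta01 : forall i, Delta i i = 0 \/ Delta i i = 1).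
Variables (x : 'I_N -> R) (a : R) (p : 'I_N).
Hypotheses (x_eig : forall j, \sum_i x i * (laplacian R e + Delta) i j = a * x j)
           (xp_neq0 : x p != 0) (x_supp : forall i, x i != 0 -> connect e p i).

Local Notation n := (N%:R : R).
Local Notation S := (\sum_i x i ^+ 2).
Local Notation G := (edge_energy e x [set: 'I_N]).
Local Notation D := (\sum_i Delta i i * x i ^+ 2).

Lemma mulx_laplacianD j :
  \sum_i x i * (laplacian R e + Delta) i j =
  \sum_i x i * laplacian R e i j + x j * Delta j j.
Proof.
under eq_bigr do rewrite mxE mulrDr.
by rewrite big_split /= (mulx_diag Delta_diag).
Qed.

Lemma eigen_rayleigh : G + 2 * D = 2 * (a * S).
Proof.
rewrite -laplacian_form // -mulrDr mulr_sumr; congr (2 * _).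
rewrite -big_split /=; apply: eq_bigr => j _.
by rewrite expr2 [RHS]mulrA -x_eig mulx_laplacianD; ring.
Qed.

Lemma eigen_sum : a * \sum_i x i = \sum_i Delta i i * x i.
Proof.
rewrite mulr_sumr (eq_bigr _ (fun j _ => esym (x_eig j))).
under eq_bigr do rewrite mulx_laplacianD.
by rewrite big_split /= sum_mulx_laplacian // add0r; apply: eq_bigr => j _; rewrite mulrC.
Qed.

Let Delta_ge0 i : 0 <= Delta i i.
Proof. by case: (Delta01 i) => ->. Qed.

Let D_ge0 : 0 <= D.
Proof. by apply: sumr_ge0 => i _; rewrite mulr_ge0 ?Delta_ge0 ?sqr_ge0. Qed.

Let S_gt0 : 0 < S.
Proof.
rewrite (bigD1 p) //= ltr_pwDl ?exprn_even_gt0 ?xp_neq0 ?orbT //.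
by apply: sumr_ge0 => i _; apply: sqr_ge0.
Qed.

Lemma eigen_ge0 : 0 <= a.
Proof.
have := eigen_rayleigh; have := edge_energy_ge0 e x [set: 'I_N]; have := D_ge0.
have := S_gt0; nra.
Qed.

Lemma eigen_energy_le : G <= 2 * (a * S).
Proof. have := eigen_rayleigh; have := D_ge0; lra. Qed.

Lemma connect_sqr_diff_le i j :
  connect e i j -> (x i - x j) ^+ 2 <= (n - 1) * (a * S).
Proof.
move=> cij; have [ds [ds_size -> ds_energy]] := connect_increments e_sym x cij.
apply: le_trans (sumr_seq_sqr_le ds) _; apply: ler_pM.
- exact: ler0n.
- by apply: sumr_ge0 => d _; apply: sqr_ge0.
- by rewrite lerBrDr natr1 ler_nat.
- have := eigen_energy_le; lra.
Qed.

Let aS_ge0 : 0 <= a * S.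
Proof. exact: mulr_ge0 eigen_ge0 (ltW S_gt0). Qed.

Let N_gt0 : (0 < N)%N := leq_ltn_trans (leq0n p) (ltn_ord p).

Let N_ge1 : 1 <= n.
Proof. by rewrite ler1n. Qed.

Let connect_support i : x i != 0 -> connect e i p.
Proof. by move=> /x_supp; rewrite (sym_connect_sym e_sym). Qed.

Lemma eigen_bound_anchored q : connect e p q -> Delta q q = 1 ->
  S <= (n ^+ 2 - n + 1) * (a * S).
Proof.
move=> cpq Dq.
have xq_le : x q ^+ 2 <= D.
  rewrite (bigD1 q) //= Dq mul1r lerDl.
  by apply: sumr_ge0 => i _; rewrite mulr_ge0 ?Delta_ge0 ?sqr_ge0.
have xi_le i : x i ^+ 2 <= n * (a * S).
  have [-> | /connect_support cip] := eqVneq (x i) 0.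
    by rewrite expr0n mulr_ge0 ?ler0n ?aS_ge0.
  have [ds [ds_size ds_sum ds_energy]] :=
    connect_increments e_sym x (connect_trans cip cpq).
  have -> : x i = \sum_(d <- x q :: ds) d by rewrite big_cons -ds_sum addrC subrK.
  apply: le_trans (sumr_seq_sqr_le _) _; rewrite big_cons /=.
  apply: ler_pM; rewrite ?ler0n ?ler_nat //.
    by rewrite addr_ge0 ?sqr_ge0 //; apply: sumr_ge0 => d _; apply: sqr_ge0.
  by have := eigen_rayleigh; lra.
have rest_le : \sum_(i | i != q) x i ^+ 2 <= (n - 1) * (n * (a * S)).
  apply: le_trans (ler_sum _ (fun i _ => xi_le i)) _.
  by rewrite sumr_const cardC1 card_ord -[_ *+ N.-1]mulr_natl -subn1 natrB.
rewrite [leLHS](bigD1 q) //=.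
by have := eigen_rayleigh; have := edge_energy_ge0 e x [set: 'I_N]; lra.
Qed.

Lemma eigen_bound_unanchored : (forall q, connect e p q -> Delta q q = 0) ->
  a != 0 -> S <= (n ^+ 2 - n) * (a * S).
Proof.
move=> Delta0 a_neq0.
have sum_x0 : \sum_i x i = 0.
  have Dx0 : \sum_i Delta i i * x i = 0.
    apply: big1 => i _; have [-> | /x_supp cpi] := eqVneq (x i) 0.
      by rewrite mulr0.
    by rewrite Delta0 ?mul0r.
  by have /eqP := eigen_sum; rewrite Dx0 mulf_eq0 (negbTE a_neq0) => /eqP.
have xi_le i : x i ^+ 2 <= (n - 1) * (a * S).
  have [-> | xi_neq0] := eqVneq (x i) 0.
    by rewrite expr0n mulr_ge0 ?aS_ge0 // subr_ge0 N_ge1.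
  have [r xir_lt0] := exists_mul_lt0 sum_x0 xi_neq0.
  have xr_neq0 : x r != 0 by apply: contraTneq xir_lt0 => ->; rewrite mulr0 ltxx.
  have cir : connect e i r.
    by apply: connect_trans (connect_support xi_neq0) (x_supp xr_neq0).
  by apply: le_trans (connect_sqr_diff_le cir); nra.
apply: le_trans (ler_sum _ (fun i _ => xi_le i)) _.
by rewrite sumr_const card_ord -[_ *+ N]mulr_natl; lra.
Qed.

Lemma eigen_lower_bound : a != 0 -> 1 <= (n ^+ 2 - n + 1) * a.
Proof.
move=> a_neq0; rewrite -(ler_pM2r S_gt0) mul1r -mulrA.
case: (pickP (fun q => connect e p q && (Delta q q == 1))) => [q | none].
  by case/andP=> cpq /eqP; apply: eigen_bound_anchored cpq.
apply: le_trans (eigen_bound_unanchored _ a_neq0) _; last by have := aS_ge0; lra.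
move=> q cpq; case: (Delta01 q) => // Dq.
by have := none q; rewrite cpq Dq eqxx.
Qed.

End EigenvectorBound.

Lemma lambdaH_gt0 (R : realFieldType) (N : nat) : (0 < N)%N -> 0 < lambdaH R N.
Proof.
rewrite -(ler_nat R 1) => N_ge1; rewrite /lambdaH divr_gt0 //.
by rewrite mulr_gt0 //; nra.
Qed.

Lemma lambdaH_le (R : realFieldType) (N : nat) (a : R) : (0 < N)%N ->
  1 <= (N%:R ^+ 2 - N%:R + 1) * a -> lambdaH R N <= a.
Proof.
rewrite -(ler_nat R 1); set n := N%:R => N_ge1 a_bound.
have k_gt0 : 0 < n ^+ 2 - n + 1 by nra.
have a_gt0 : 0 < a by nra.
have cubic : 4 * (n ^+ 2 - n + 1) <= n * (n ^+ 2 - n + 4).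
  rewrite -subr_ge0 (_ : _ - _ = (n - 1) * (n - 2) ^+ 2); last by ring.
  by rewrite mulr_ge0 ?sqr_ge0 ?subr_ge0.
rewrite /lambdaH ler_pdivrMr; last by rewrite mulr_gt0 //; nra.
nra.
Qed.

Theorem lemma3 (R : rcfType) (N : nat) (hN : (0 < N)%N) (e : rel 'I_N)
  (e_sym : symmetric e) (e_irr : irreflexive e) (Delta : 'M[R]_N)
  (Delta_diag : forall i j : 'I_N, i != j -> Delta i j = 0)
  (Delta01 : forall i : 'I_N, Delta i i = 0 \/ Delta i i = 1) :
  0 < lambdaH R N /\
  (forall a : R, eigenvalue (laplacian R e + Delta) a -> a != 0 -> lambdaH R N <= a).
Proof.
split; first exact: lambdaH_gt0.
move=> a /eigenvalueP[v v_eig v_neq0] a_neq0; apply: lambdaH_le => //.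
have [p vp_neq0] : exists p, v 0 p != 0.
  apply/existsP; apply: contraNT v_neq0 => /existsPn v0.
  by apply/eqP/rowP => j; rewrite mxE; apply/eqP/negPn.
pose x i := if connect e p i then v 0 i else 0.
have x_eig j : \sum_i x i * (laplacian R e + Delta) i j = a * x j.
  rewrite mulx_restrict; last first.
    apply: (connect_block (M := laplacian R e + Delta) e_sym) => i k ik eik.
    by rewrite !mxE (negbTE ik) (negbTE eik) Delta_diag // oppr0 addr0.
  move/rowP/(_ j): v_eig; rewrite !mxE => ->.
  by rewrite /x; case: ifP; rewrite ?mulr0.
apply: (eigen_lower_bound (p := p) e_sym e_irr Delta_diag Delta01 x_eig _ _ a_neq0).
- by rewrite /x connect0.
- by move=> i; rewrite /x; case: ifP; rewrite ?eqxx.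
Qed.
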